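(* For the slotted $N$-queue system with the information structure described in the context, the class of throughput optimal, stationary Markov scheduling policies is not a singleton.
   Context: $N$ queues $I=\{1,\dots,N\}$ share a single server in slotted time; arrivals to queue $j$ are i.i.d. Bernoulli($\lambda_j$), independent across queues; at most one queue is scheduled per slot, transmitting one packet if nonempty; $Q_j(t+1)=(Q_j(t)-D_j(t))^++A_j(t+1)$. Information structure: at each slot the scheduler knows the queue scheduled in the previous slot (the incumbent) and its current backlog, the backlog of each queue at the end of the last slot it was allowed to transmit, and for each queue $j$ the number $V_j(t)$ of slots since it was last scheduled. A scheduling policy is stationary Markov if its decision in each slot depends only on the current state (of these quantities), through a fixed map. A policy is throughput optimal if it makes the system stable (the backlog Markov chain positive recurrent) for every arrival rate vector in the capacity region $\{\boldsymbol\lambda\in\mathbb{R}^N_+:\sum_i\lambda_i<1\}$. *)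

From mathcomp Require Import all_boot.
From Stdlib Require Import Reals.
Set Implicit Arguments.
Unset Strict Implicit.
Unset Printing Implicit Defensive.

(** Queues are indexed by 'I_N  (queue j of the paper is the ordinal j-1). *)

(** Full system state at the beginning of a slot t:
    - Q    : true backlogs Q_j(t)
    - inc  : the incumbent (queue scheduled in the previous slot)
    - L    : for each queue, its backlog observed at the end of the last slot
             in which it was allowed to transmit
    - V    : V_j(t), number of slots since queue j was last scheduled. *)
Definition state (N : nat) : Type :=
  ({ffun 'I_N -> nat} * 'I_N * {ffun 'I_N -> nat} * {ffun 'I_N -> nat})%type.

Definition stQ N (x : state N) : {ffun 'I_N -> nat} := x.1.1.1.
Definition stInc N (x : state N) : 'I_N := x.1.1.2.
Definition stL N (x : state N) : {ffun 'I_N -> nat} := x.1.2.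
Definition stV N (x : state N) : {ffun 'I_N -> nat} := x.2.

(** A stationary Markov scheduling policy: a fixed map from the scheduler's
    current information (incumbent, incumbent's current backlog, last observed
    backlogs, ages V) to the queue scheduled in the current slot. *)
Definition policy (N : nat) : Type :=
  'I_N -> nat -> {ffun 'I_N -> nat} -> {ffun 'I_N -> nat} -> 'I_N.

Definition decide N (pi : policy N) (x : state N) : 'I_N :=
  pi (stInc x) (stQ x (stInc x)) (stL x) (stV x).

(** One slot of dynamics, given the arrival vector a = (A_j(t+1))_j.
    D_j(t) = 1 iff j is scheduled (and nonempty); truncated subtraction gives
    Q_j(t+1) = (Q_j(t) - D_j(t))^+ + A_j(t+1). *)
Definition step N (pi : policy N) (x : state N) (a : {ffun 'I_N -> bool}) : state N :=
  let s := decide pi x in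
  let Q' := [ffun j => (stQ x j - (j == s)) + a j] in
  let L' := [ffun j => if j == s then Q' s else stL x j] in
  let V' := [ffun j => if j == s then 1 else (stV x j).+1] in
  (Q', s, L', V').

Definition sumR (A : Type) (s : seq A) (f : A -> R) : R :=
  foldr (fun a acc => (f a + acc)%R) 0%R s.

(** Probability of the arrival vector a: independent Bernoulli(lam j). *)
Definition arrP N (lam : 'I_N -> R) (a : {ffun 'I_N -> bool}) : R :=
  foldr (fun j acc => ((if a j then lam j else 1 - lam j) * acc)%R) 1%R (enum 'I_N).

Definition Earr N (lam : 'I_N -> R) (f : {ffun 'I_N -> bool} -> R) : R :=
  sumR (enum {ffun 'I_N -> bool}) (fun a => (arrP lam a * f a)%R).

Fixpoint pstep N (pi : policy N) (lam : 'I_N -> R) (n : nat) (x y : state N) : R :=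
  match n with
  | 0 => if x == y then 1%R else 0%R
  | n'.+1 => Earr lam (fun a => pstep pi lam n' (step pi x a) y)
  end.

(** First-passage probability f^n(x, y) = P_x(T_y = n), T_y = inf {t >= 1 : X_t = y}. *)
Fixpoint fpass N (pi : policy N) (lam : 'I_N -> R) (n : nat) (x y : state N) : R :=
  match n with
  | 0 => 0%R
  | n'.+1 => Earr lam (fun a =>
               let z := step pi x a in
               if z == y then (if n' == 0 then 1%R else 0%R)
               else fpass pi lam n' z y)
  end.

Definition reachable N (pi : policy N) (lam : 'I_N -> R) (x y : state N) : Prop :=
  exists n, (0 < pstep pi lam n x y)%R.

Definition pos_recurrent N (pi : policy N) (lam : 'I_N -> R) (y : state N) : Prop :=
  infinite_sum (fun n => fpass pi lam n y y) 1%R /\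
  exists m : R, infinite_sum (fun n => (INR n * fpass pi lam n y y)%R) m.

Definition stable N (pi : policy N) (lam : 'I_N -> R) : Prop :=
  forall x0 : state N, exists y : state N,
    pos_recurrent pi lam y /\
    (x0 = y \/ infinite_sum (fun n => fpass pi lam n x0 y) 1%R).

Definition in_capacity N (lam : 'I_N -> R) : Prop :=
  (forall j, 0 <= lam j)%R /\ (sumR (enum 'I_N) lam < 1)%R.

Definition throughput_optimal N (pi : policy N) : Prop :=
  forall lam : 'I_N -> R, in_capacity lam -> stable pi lam.

Definition empty_state N (i0 : 'I_N) : state N :=
  ([ffun => 0], i0, [ffun => 0], [ffun => 0]).

(* Threshold policies (keep serving the incumbent while its backlog exceeds a
   threshold, otherwise hand over to the next queue in cyclic order) are
   throughput optimal for every threshold, and the thresholds 0 and 1 already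
   disagree after one arrival to the queue served first.
   For optimality, weigh each packet in queue j by a constant plus the cyclic
   distance from the incumbent to j.  Staying with a busy incumbent lowers this
   Lyapunov function by the constant, which beats the expected weight of the
   arrivals; handing over lowers it by one per packet in the system.  So it
   drifts down outside a bounded set of backlogs and up by a bounded amount
   inside.  From a bounded backlog the arrival-free evolution, which has
   positive probability in each slot, empties the system and reaches one fixed
   empty state within a bounded number of slots.  Adding a penalty for the
   remaining arrival-free steps yields a function that drops by one per slot
   until that state is hit, which bounds its expected hitting time from every
   state: the state is positive recurrent and reached almost surely. *)

From mathcomp Require Import all_boot zify Rstruct.
From Stdlib Require Import Reals Lra.
Set Implicit Arguments.
Unset Strict Implicit.
Unset Printing Implicit Defensive.

Section CyclicOrder.
Variable n : nat.
Implicit Types i j : 'I_n.+1.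

Definition cdist i j : nat := if i <= j then j - i else n.+1 + j - i.

Lemma ordSE i : ordS i = (if i < n then i.+1 else 0) :> nat.
Proof.
rewrite /=; case: ltnP => [lt_in|le_ni]; first by rewrite modn_small.
by rewrite (_ : i.+1 = n.+1) ?modnn //; have := ltn_ord i; lia.
Qed.

Lemma ordS_neq i : 0 < n -> ordS i != i.
Proof.
by move=> n_gt0; apply/eqP => /(congr1 (@nat_of_ord _)); rewrite ordSE; case: ifP; lia.
Qed.

Lemma cdist_le i j : cdist i j <= n.
Proof. by have := ltn_ord i; have := ltn_ord j; rewrite /cdist; case: ifP; lia. Qed.

Lemma cdistxx i : cdist i i = 0.
Proof. by rewrite /cdist leqnn subnn. Qed.

Lemma cdist_eq0 i j : cdist i j = 0 -> i = j.
Proof.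
have := ltn_ord i; have := ltn_ord j; rewrite /cdist => ? ?.
by case: ifP => ? ?; apply: val_inj => /=; lia.
Qed.

Lemma cdistSl i j : j != i -> cdist (ordS i) j = (cdist i j).-1.
Proof.
move=> /eqP ne_ji; have {}ne_ji : j <> i :> nat by move=> /val_inj.
move: (ltn_ord i) (ltn_ord j); rewrite /cdist ordSE => ? ?.
by case: (ltnP i n) => ? /=; repeat case: ifP => ?; lia.
Qed.

Lemma cdistSl_self i : cdist (ordS i) i = n.
Proof.
move: (ltn_ord i); rewrite /cdist ordSE => ?.
by case: (ltnP i n) => ? /=; repeat case: ifP => ?; lia.
Qed.

Lemma cdistSr i j : i != ordS j -> cdist i (ordS j) = (cdist i j).+1.
Proof.
move=> /eqP ne_ij; have {ne_ij} : i <> ordS j :> nat by move=> /val_inj.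
move: (ltn_ord i) (ltn_ord j); rewrite /cdist ordSE => ? ?.
by case: (ltnP j n) => ? /=; repeat case: ifP => ?; lia.
Qed.

Lemma iter_ordS_cdist i j : iter (cdist i j) (@ordS n.+1) i = j.
Proof.
move dij: (cdist i j) => k; elim: k i dij => [|k IHk] i dij.
  by rewrite (cdist_eq0 dij).
have ne_ji : j != i by apply: contra_eq_neq dij => ->; rewrite cdistxx.
by rewrite iterSr; apply: IHk; rewrite cdistSl // dij.
Qed.

Lemma iter_ordS_period i : iter n.+1 (@ordS n.+1) i = i.
Proof. by rewrite iterSr -{2}(iter_ordS_cdist (ordS i) i) cdistSl_self. Qed.

Lemma iter_ordS_onto i j : exists2 k, 0 < k <= n.+1 & iter k (@ordS n.+1) i = j.
Proof.
have [->|ne_ji] := eqVneq j i; first by exists n.+1; rewrite ?leqnn ?iter_ordS_period.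
exists (cdist i j); last exact: iter_ordS_cdist.
have : cdist i j <> 0 by move/cdist_eq0/eqP; rewrite eq_sym (negbTE ne_ji).
by have := cdist_le i j; lia.
Qed.

End CyclicOrder.

Section ArrivalExpectation.
Local Open Scope R_scope.
Variables (N : nat) (lam : 'I_N -> R).
Hypothesis lam01 : forall j, 0 <= lam j <= 1.
Implicit Types (a : {ffun 'I_N -> bool}) (f g : {ffun 'I_N -> bool} -> R).

Lemma sumR_big (A : Type) (s : seq A) (f : A -> R) :
  sumR s f = \big[Rplus/0]_(x <- s) f x.
Proof. by elim: s => [|x s IHs] /=; rewrite ?big_nil ?big_cons ?IHs. Qed.

Lemma arrP_prod a :
  arrP lam a = \big[Rmult/1]_(j : 'I_N) (if a j then lam j else 1 - lam j).
Proof.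
rewrite /arrP -big_enum /=.
by elim: (enum _) => [|j s IHs] /=; rewrite ?big_nil ?big_cons ?IHs.
Qed.

Lemma Earr_sum f : Earr lam f = \big[Rplus/0]_a (arrP lam a * f a).
Proof. by rewrite /Earr sumR_big big_enum. Qed.

Lemma arrP_ge0 a : 0 <= arrP lam a.
Proof.
rewrite arrP_prod; apply: (big_ind (Rle 0)) => [|x y|j _]; [lra|exact: Rmult_le_pos|].
by case: (a j); have := lam01 j; lra.
Qed.

Lemma sum_arrP : \big[Rplus/0]_a arrP lam a = 1.
Proof.
under eq_bigr => a _ do rewrite arrP_prod.
rewrite -(bigA_distr_bigA (fun j (b : bool) => if b then lam j else 1 - lam j)).
by apply: big1 => j _; rewrite big_bool /=; lra.
Qed.

Lemma eq_Earr f g : (forall a, f a = g a) -> Earr lam f = Earr lam g.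
Proof. by move=> fg; rewrite !Earr_sum; apply: eq_bigr => a _; rewrite fg. Qed.

Lemma EarrD f g : Earr lam (fun a => f a + g a) = Earr lam f + Earr lam g.
Proof. by rewrite !Earr_sum -big_split; apply: eq_bigr => a _ /=; ring. Qed.

Lemma EarrZ c f : Earr lam (fun a => c * f a) = c * Earr lam f.
Proof. by rewrite !Earr_sum big_distrr; apply: eq_bigr => a _ /=; ring. Qed.

Lemma EarrB f g : Earr lam (fun a => f a - g a) = Earr lam f - Earr lam g.
Proof.
rewrite -[Earr lam g]Rmult_1_l /Rminus Ropp_mult_distr_l -EarrZ -EarrD.
by apply: eq_Earr => a; ring.
Qed.

Lemma Earr_cst c : Earr lam (fun _ => c) = c.
Proof. by rewrite Earr_sum -big_distrl /= sum_arrP; ring. Qed.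

Lemma Earr_le f g : (forall a, f a <= g a) -> Earr lam f <= Earr lam g.
Proof.
move=> fg; rewrite !Earr_sum; apply: (big_ind2 Rle) => [|*|a _]; [lra|lra|].
exact/Rmult_le_compat_l/fg/arrP_ge0.
Qed.

Lemma Earr_ge0 f : (forall a, 0 <= f a) -> 0 <= Earr lam f.
Proof. by move=> f_ge0; rewrite -(Earr_cst 0); apply: Earr_le. Qed.

Lemma Earr_sum_f_R0 (f : nat -> {ffun 'I_N -> bool} -> R) n :
  Earr lam (fun a => sum_f_R0 (f^~ a) n) = sum_f_R0 (fun k => Earr lam (f k)) n.
Proof. by elim: n => [|n IHn] //=; rewrite EarrD IHn. Qed.

Lemma Earr_bigsum (I : finType) (f : I -> {ffun 'I_N -> bool} -> R) :
  Earr lam (fun a => \big[Rplus/0]_i f i a) = \big[Rplus/0]_i Earr lam (f i).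
Proof.
rewrite Earr_sum; under eq_bigr => a _ do rewrite big_distrr /=.
by rewrite exchange_big; apply: eq_bigr => i _; rewrite Earr_sum.
Qed.

Lemma Earr_arrival j : Earr lam (fun a => if a j then 1 else 0) = lam j.
Proof.
pose F i (b : bool) :=
  (if b then lam i else 1 - lam i) * (if i == j then (if b then 1 else 0) else 1).
rewrite Earr_sum (eq_bigr (fun a => \big[Rmult/1]_i F i (a i))); last first.
  move=> a _; rewrite arrP_prod big_split /=; congr (_ * _).
  by rewrite (bigD1 j) //= eqxx big1 ?Rmult_1_r // => i /negbTE ->.
rewrite -(bigA_distr_bigA F) (bigD1 j) //= [X in _ * X]big1; last first.
  by move=> i /negbTE ne_ij; rewrite big_bool /F /= ne_ij; lra.
by rewrite big_bool /F /= eqxx; lra.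
Qed.

Lemma arrP_mul_le_Earr f a : (forall a, 0 <= f a) -> arrP lam a * f a <= Earr lam f.
Proof.
move=> f_ge0; rewrite Earr_sum (bigD1 a) //= -{1}[_ * _]Rplus_0_r.
apply/Rplus_le_compat_l/(big_ind (Rle 0)) => [|*|b _]; [lra|lra|].
exact/Rmult_le_pos/f_ge0/arrP_ge0.
Qed.

Lemma arrP_le1 a : arrP lam a <= 1.
Proof.
rewrite -(Earr_cst 1) -[arrP lam a]Rmult_1_r.
by apply: arrP_mul_le_Earr => _; lra.
Qed.

Lemma Earr_le_split f a0 c : (forall a, f a <= c) ->
  Earr lam f <= arrP lam a0 * f a0 + (1 - arrP lam a0) * c.
Proof.
move=> f_le; rewrite Earr_sum (bigD1 a0) //=.
have := sum_arrP; rewrite (bigD1 a0) //= => sum1.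
rewrite (_ : 1 - _ = \big[Rplus/0]_(a | a != a0) arrP lam a); last by rewrite -sum1 Rplus_minus_l.
rewrite (big_distrl (times := Rmult)) /=.
apply/Rplus_le_compat_l/(big_ind2 Rle) => [|*|a _]; [lra|lra|].
exact/Rmult_le_compat_l/f_le/arrP_ge0.
Qed.

End ArrivalExpectation.

Lemma sum_f_R0_delta0 (g : nat -> R) n :
  sum_f_R0 (fun k => (g k * if k == 0%nat then 1 else 0)%R) n = g 0%nat.
Proof. by elim: n => [|n IHn] /=; rewrite ?IHn; ring. Qed.

Lemma sum_f_R0_delta0_1 n : sum_f_R0 (fun k => if k == 0%nat then 1%R else 0%R) n = 1%R.
Proof. by elim: n => [|n IHn] //=; rewrite IHn; ring. Qed.

Section HittingDrift.
Local Open Scope R_scope.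
Variables (N : nat) (pi : policy N) (lam : 'I_N -> R) (y : state N).
Hypothesis lam01 : forall j, 0 <= lam j <= 1.

Fixpoint avoid_prob n x : R :=
  if n is n'.+1 then
    Earr lam (fun a => if step pi x a == y then 0 else avoid_prob n' (step pi x a))
  else 1.

(* E_x[min(T_y, n)], with T_y the first passage time to y. *)
Definition trunc_mean n x : R :=
  sum_f_R0 (fun k => INR k * fpass pi lam k x y) n + INR n * avoid_prob n x.

Lemma avoid_probS n x : avoid_prob n.+1 x =
  Earr lam (fun a => if step pi x a == y then 0 else avoid_prob n (step pi x a)).
Proof. by []. Qed.

Lemma avoid_prob_ge0 n x : 0 <= avoid_prob n x.
Proof.
elim: n x => [|n IHn] x /=; first lra.
by apply: Earr_ge0 => // a; case: ifP => _; [lra|exact: IHn].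
Qed.

Lemma fpass_ge0 n x : 0 <= fpass pi lam n x y.
Proof.
elim: n x => [|n IHn] x /=; first lra.
by apply: Earr_ge0 => // a; do 2?case: ifP => _; try lra; exact: IHn.
Qed.

Lemma sum_fpass n x : sum_f_R0 (fun k => fpass pi lam k x y) n = 1 - avoid_prob n x.
Proof.
elim: n x => [|n IHn] x; first by rewrite /=; lra.
rewrite (decomp_sum _ _ (Nat.lt_0_succ n)) /= Rplus_0_l.
rewrite -(Earr_sum_f_R0 lam (fun k a => if step pi x a == y then
           (if k == 0%nat then 1 else 0) else fpass pi lam k (step pi x a) y)).
rewrite -[1 in RHS](Earr_cst lam 1) -EarrB.
apply: eq_Earr => a; case: (step pi x a == y) => /=; last by rewrite IHn; ring.
by rewrite sum_f_R0_delta0_1; ring.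
Qed.

Lemma trunc_meanS n x :
  trunc_mean n.+1 x =
  1 + Earr lam (fun a => if step pi x a == y then 0 else trunc_mean n (step pi x a)).
Proof.
rewrite /trunc_mean (decomp_sum _ _ (Nat.lt_0_succ n)) Rmult_0_l Rplus_0_l.
rewrite (sum_eq _ (fun k => Earr lam (fun a => INR k.+1 * if step pi x a == y then
           (if k == 0%nat then 1 else 0) else fpass pi lam k (step pi x a) y))); last first.
  by move=> k _; rewrite EarrZ.
rewrite avoid_probS -Earr_sum_f_R0 -EarrZ -EarrD -[1 in RHS](Earr_cst lam 1) -EarrD.
apply: eq_Earr => a; case: (step pi x a == y); cbv match.
  by rewrite sum_f_R0_delta0; simpl INR; ring.
rewrite /trunc_mean S_INR.
have -> : sum_f_R0 (fun k => INR k.+1 * fpass pi lam k (step pi x a) y) n =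
          sum_f_R0 (fun k => INR k * fpass pi lam k (step pi x a) y) n +
          sum_f_R0 (fun k => fpass pi lam k (step pi x a) y) n.
  by rewrite -plus_sum; apply: sum_eq => k _; rewrite S_INR; ring.
by rewrite sum_fpass; ring.
Qed.

Variable h : state N -> R.
Hypothesis h_ge0 : forall x, 0 <= h x.
Hypothesis h_drift : forall x,
  1 + Earr lam (fun a => if step pi x a == y then 0 else h (step pi x a)) <= h x.

Lemma trunc_mean_le n x : trunc_mean n x <= h x.
Proof.
elim: n x => [|n IHn] x; first by rewrite /trunc_mean /=; have := h_ge0 x; lra.
rewrite trunc_meanS; apply/(Rle_trans _ _ _ _ (h_drift x))/Rplus_le_compat_l.
by apply: Earr_le => // a; case: ifP => _; [lra|exact: IHn].
Qed.

Lemma sum_mean_le n x : sum_f_R0 (fun k => INR k * fpass pi lam k x y) n <= h x.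
Proof.
have := trunc_mean_le n x; rewrite /trunc_mean.
by have := avoid_prob_ge0 n x; have := pos_INR n; nra.
Qed.

Lemma avoid_prob_le n x : INR n * avoid_prob n x <= h x.
Proof.
have := trunc_mean_le n x; rewrite /trunc_mean.
suff: 0 <= sum_f_R0 (fun k => INR k * fpass pi lam k x y) n by lra.
by apply: cond_pos_sum => k; apply/Rmult_le_pos/fpass_ge0/pos_INR.
Qed.

Lemma fpass_series1 x : infinite_sum (fun n => fpass pi lam n x y) 1.
Proof.
move=> eps eps_gt0; have [K hK] := INR_unbounded (h x / eps).
exists K => n le_Kn; rewrite /R_dist sum_fpass.
have hx_lt : h x < eps * INR n.
  have -> : h x = eps * (h x / eps) by field; lra.
  by apply/Rmult_lt_compat_l/(Rlt_le_trans _ _ _ hK)/le_INR.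
have := avoid_prob_le n x; have := avoid_prob_ge0 n x; have := pos_INR n.
rewrite (_ : _ - _ - 1 = - avoid_prob n x); last by ring.
by rewrite Rabs_Ropp => ? u_ge0 ?; rewrite Rabs_pos_eq //; nra.
Qed.

Lemma pos_recurrent_target : pos_recurrent pi lam y.
Proof.
split; first exact: fpass_series1.
set S := sum_f_R0 (fun n => INR n * fpass pi lam n y y).
have S_growing : Un_growing S.
  move=> n; rewrite /S tech5 -[X in X <= _]Rplus_0_r.
  exact/Rplus_le_compat_l/Rmult_le_pos/fpass_ge0/pos_INR.
have S_bounded : has_ub S by exists (h y) => _ [n ->]; exact: sum_mean_le.
by have [l ?] := growing_cv _ S_growing S_bounded; exists l.
Qed.

Lemma hitting_drift_stable : stable pi lam.
Proof.
by move=> x0; exists y; split; [exact: pos_recurrent_target|right; exact: fpass_series1].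
Qed.

End HittingDrift.

Section FosterToHitting.
Local Open Scope R_scope.
Variables (N : nat) (pi : policy N) (lam : 'I_N -> R) (y : state N).
Hypothesis lam01 : forall j, 0 <= lam j <= 1.
Variable a0 : {ffun 'I_N -> bool}.
Hypothesis arrP_a0_gt0 : 0 < arrP lam a0.
Local Notation p0 := (arrP lam a0).
Local Notation next := (step pi ^~ a0).
Variables (C : pred (state N)) (M : nat).
Hypothesis C_next : forall x, C x -> C (next x).
Hypothesis C_hit : forall x, C x -> exists2 k, (k < M)%nat & iter k.+1 next x = y.
Variables (W : state N -> R) (c : R).
Hypothesis W_ge0 : forall x, 0 <= W x.
Hypothesis c_ge0 : 0 <= c.
Hypothesis W_drift : forall x, Earr lam (fun a => W (step pi x a)) <= W x + c.
Hypothesis W_drift_out : forall x, ~~ C x -> Earr lam (fun a => W (step pi x a)) <= W x - 1.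

Definition hit_time x : nat := (find (fun k => iter k.+1 next x == y) (iota 0 M)).+1.

Lemma hit_time_le x : (hit_time x <= M.+1)%nat.
Proof. by rewrite /hit_time ltnS -[X in (_ <= X)%nat](size_iota 0 M) find_size. Qed.

Lemma hit_time_min x k : (k < M)%nat -> iter k.+1 next x = y -> (hit_time x <= k.+1)%nat.
Proof.
move=> lt_kM hit_k; rewrite /hit_time ltnS leqNgt; apply/negP => /(before_find 0%nat).
by rewrite nth_iota // add0n hit_k eqxx.
Qed.

Lemma iter_hit_time x : C x -> iter (hit_time x) next x = y.
Proof.
move=> /C_hit[k lt_kM hit_k].
have has_hit : has (fun k => iter k.+1 next x == y) (iota 0 M).
  by apply/hasP; exists k; rewrite ?mem_iota ?hit_k.
have := has_hit; rewrite has_find size_iota => lt_find.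
by move: (nth_find 0%nat has_hit); rewrite nth_iota // add0n => /eqP.
Qed.

Lemma hit_time_next x : C x -> next x != y -> (hit_time (next x) <= (hit_time x).-1)%nat.
Proof.
move=> Cx next_ne; have := iter_hit_time Cx; have := hit_time_le x.
rewrite [hit_time x]/hit_time; case: find => [|m] le_mM hit; first by case/eqP: next_ne.
by apply: hit_time_min; [lia|rewrite -iterSr].
Qed.

Definition hit_cost_max : R := (1 + c) * INR M.+1 / p0 ^ M.+1.

(* hit_cost m pays for m arrival-free steps towards y: such a step happens with
   probability p0, otherwise the chain moves anywhere and pays at most hit_cost_max. *)
Fixpoint hit_cost m : R :=
  if m is m'.+1 then 1 + c + (1 - p0) * hit_cost_max + p0 * hit_cost m' else 0.

Lemma hit_costS m : hit_cost m.+1 = 1 + c + (1 - p0) * hit_cost_max + p0 * hit_cost m.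
Proof. by []. Qed.

Lemma hit_cost_max_ge0 : 0 <= hit_cost_max.
Proof.
apply/Rmult_le_pos/Rlt_le/Rinv_0_lt_compat/pow_lt => //.
by apply: Rmult_le_pos; [lra|exact: pos_INR].
Qed.

Lemma hit_cost_ge0 m : 0 <= hit_cost m.
Proof.
elim: m => [|m IHm] /=; first lra.
have := arrP_le1 lam01 a0; have := hit_cost_max_ge0; nra.
Qed.

Lemma hit_cost_le_succ m : hit_cost m <= hit_cost m.+1.
Proof.
elim: m => [|m IHm]; first by have := hit_cost_ge0 1; rewrite /= Rmult_0_r; lra.
by rewrite [hit_cost m.+2]/= [hit_cost m.+1]/= in IHm *; nra.
Qed.

Lemma hit_cost_mono m m' : (m <= m')%nat -> hit_cost m <= hit_cost m'.
Proof.
move/subnK <-; elim: (m' - m)%nat => [|k IHk]; first exact: Rle_refl.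
exact: Rle_trans IHk (hit_cost_le_succ _).
Qed.

(* hit_cost_max is chosen so that this bound equals hit_cost_max at m = M.+1. *)
Lemma hit_cost_le m : hit_cost m <= (1 + c) * INR m + hit_cost_max * (1 - p0 ^ m).
Proof.
elim: m => [|m IHm]; first by rewrite /=; lra.
rewrite [hit_cost _]/= [p0 ^ _]/= S_INR.
have p0IHm := Rmult_le_compat_l _ _ _ (Rlt_le _ _ arrP_a0_gt0) IHm.
have : 0 <= (1 - p0) * ((1 + c) * INR m).
  by apply: Rmult_le_pos; [have := arrP_le1 lam01 a0|have := pos_INR m; nra]; lra.
by move=> *; nra.
Qed.

Lemma hit_cost_le_max m : (m <= M.+1)%nat -> hit_cost m <= hit_cost_max.
Proof.
move=> /hit_cost_mono le_m; apply/(Rle_trans _ _ _ le_m)/(Rle_trans _ _ _ (hit_cost_le _)).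
have p0M_gt0 : 0 < p0 ^ M.+1 by exact: pow_lt.
have : hit_cost_max * p0 ^ M.+1 = (1 + c) * INR M.+1 by rewrite /hit_cost_max; field; lra.
lra.
Qed.

Definition hit_penalty x : R := if C x then hit_cost (hit_time x) else hit_cost_max.

Lemma hit_penalty_ge0 x : 0 <= hit_penalty x.
Proof. by rewrite /hit_penalty; case: ifP => _; [exact: hit_cost_ge0|exact: hit_cost_max_ge0]. Qed.

Lemma hit_penalty_le_max x : hit_penalty x <= hit_cost_max.
Proof.
rewrite /hit_penalty; case: ifP => _; last exact: Rle_refl.
exact/hit_cost_le_max/hit_time_le.
Qed.

Lemma hit_penalty_next x : C x ->
  (if next x == y then 0 else hit_penalty (next x)) <= hit_cost (hit_time x).-1.
Proof.
move=> Cx; case: ifPn => [_|next_ne]; first exact: hit_cost_ge0.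
by rewrite /hit_penalty C_next //; apply/hit_cost_mono/hit_time_next.
Qed.

Definition hit_lyapunov x : R := W x + hit_penalty x.

Lemma hit_lyapunov_drift x :
  1 + Earr lam (fun a => if step pi x a == y then 0 else hit_lyapunov (step pi x a))
  <= hit_lyapunov x.
Proof.
pose g a := if step pi x a == y then 0 else hit_penalty (step pi x a).
have Eg_le : Earr lam (fun a => if step pi x a == y then 0 else hit_lyapunov (step pi x a))
             <= Earr lam (fun a => W (step pi x a)) + Earr lam g.
  rewrite -EarrD; apply: Earr_le => // a; rewrite /g /hit_lyapunov.
  by case: ifP => _; [have := W_ge0 (step pi x a)|]; lra.
have g_le a : g a <= hit_cost_max.
  by rewrite /g; case: ifP => _; [exact: hit_cost_max_ge0|exact: hit_penalty_le_max].
rewrite {2}/hit_lyapunov /hit_penalty; case: ifPn => [Cx|notCx].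
- rewrite (_ : hit_time x = (hit_time x).-1.+1) // hit_costS.
  have g0_le : g a0 <= hit_cost (hit_time x).-1 := hit_penalty_next Cx.
  have := Rmult_le_compat_l _ _ _ (Rlt_le _ _ arrP_a0_gt0) g0_le.
  by have := Earr_le_split lam01 a0 g_le; have := W_drift x; lra.
- have := W_drift_out notCx; have : Earr lam g <= hit_cost_max.
    by rewrite -(Earr_cst lam hit_cost_max); exact: Earr_le.
  lra.
Qed.

Lemma foster_hitting_stable : stable pi lam.
Proof.
apply: (hitting_drift_stable lam01 (h := hit_lyapunov)) hit_lyapunov_drift => x.
by apply: Rplus_le_le_0_compat; [exact: W_ge0|exact: hit_penalty_ge0].
Qed.

End FosterToHitting.

Section OneSlot.
Variables (N : nat) (pi : policy N).
Implicit Types (x : state N) (a : {ffun 'I_N -> bool}).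

Definition backlog x : nat := \sum_j stQ x j.

Definition no_arrival : {ffun 'I_N -> bool} := [ffun => false].

Lemma state_ext x x' : stQ x = stQ x' -> stInc x = stInc x' ->
  stL x = stL x' -> stV x = stV x' -> x = x'.
Proof.
case: x x' => [[[? ?] ?] ?] [[[? ?] ?] ?].
by rewrite /stQ /stInc /stL /stV /= => -> -> -> ->.
Qed.

Lemma stQ_step x a j : stQ (step pi x a) j = stQ x j - (j == decide pi x) + a j.
Proof. by rewrite /stQ /= ffunE. Qed.

Lemma stInc_step x a : stInc (step pi x a) = decide pi x.
Proof. by []. Qed.

Lemma stL_step x a j :
  stL (step pi x a) j = if j == decide pi x then stQ (step pi x a) j else stL x j.
Proof. by rewrite /stL /= ffunE; case: eqP => // ->. Qed.

Lemma stV_step x a j : stV (step pi x a) j = if j == decide pi x then 1 else (stV x j).+1.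
Proof. by rewrite /stV /= ffunE. Qed.

Lemma stQ_le_backlog x j : stQ x j <= backlog x.
Proof. by rewrite /backlog (bigD1 j) //= leq_addr. Qed.

Lemma backlog_eq0 x : backlog x = 0 -> stQ x = [ffun => 0].
Proof.
by move=> b0; apply/ffunP => j; rewrite ffunE; apply/eqP; rewrite -leqn0 -b0 stQ_le_backlog.
Qed.

Lemma backlog_no_arrival x :
  backlog (step pi x no_arrival) = backlog x - (0 < stQ x (decide pi x)).
Proof.
rewrite /backlog (bigD1 (decide pi x)) //= [in RHS](bigD1 (decide pi x)) //=.
rewrite stQ_step eqxx ffunE (eq_bigr (stQ x)) => [|j /negbTE ne_j]; last first.
  by rewrite stQ_step ne_j ffunE subn0 addn0.
by case: (stQ x _) => [|q] /=; lia.
Qed.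

End OneSlot.

Section ThresholdPolicy.
Variables (n th : nat).
Implicit Types (x : state n.+1) (c : 'I_n.+1).

Definition threshold_policy : policy n.+1 :=
  fun inc q _ _ => if th < q then inc else ordS inc.

Local Notation quiet := (step threshold_policy ^~ (no_arrival n.+1)).

Lemma decide_threshold x :
  decide threshold_policy x = if th < stQ x (stInc x) then stInc x else ordS (stInc x).
Proof. by []. Qed.

Lemma backlog_quiet_le x : backlog (quiet x) <= backlog x.
Proof. by rewrite backlog_no_arrival leq_subr. Qed.

Lemma backlog_iter_quiet_le k x : backlog (iter k quiet x) <= backlog x.
Proof. by elim: k => //= k IHk; exact: leq_trans (backlog_quiet_le _) IHk. Qed.

Lemma quiet_idle k x : backlog (iter k quiet x) = backlog x ->
  [/\ stQ (iter k quiet x) = stQ x, stInc (iter k quiet x) = iter k (@ordS n.+1) (stInc x)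
    & forall k', 0 < k' <= k -> stQ x (iter k' (@ordS n.+1) (stInc x)) = 0].
Proof.
elim: k => [_|k IHk]; first by split=> // k'; lia.
set xk := iter k quiet x => /= eq_b.
have eq_bk : backlog xk = backlog x.
  by apply/eqP; rewrite eqn_leq backlog_iter_quiet_le -{1}eq_b backlog_quiet_le.
have [eQ eInc idle] := IHk eq_bk.
have Q0 : stQ xk (decide threshold_policy xk) = 0.
  move: eq_b (stQ_le_backlog xk (decide threshold_policy xk)).
  by rewrite backlog_no_arrival -/xk eq_bk; case: posnP => //; lia.
have dec : decide threshold_policy xk = ordS (stInc xk).
  by move: Q0; rewrite decide_threshold; case: ltnP => // th_lt Q0; move: th_lt; rewrite Q0.
rewrite dec in Q0; rewrite -/xk in eQ eInc; split.
- apply/ffunP => j; rewrite stQ_step dec ffunE addn0 -eQ.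
  by case: eqP => [->|_]; rewrite ?Q0 ?subn0.
- by rewrite stInc_step dec eInc.
- move=> k' /andP[k'_gt0]; rewrite leq_eqVlt => /orP[/eqP->|]; first by rewrite iterS -eInc -eQ.
  by rewrite ltnS => ?; apply: idle; lia.
Qed.

Lemma quiet_backlog_drop x : 0 < backlog x -> backlog (iter n.+1 quiet x) < backlog x.
Proof.
move=> b_gt0; rewrite ltn_neqAle backlog_iter_quiet_le andbT.
apply/eqP => /quiet_idle[_ _ idle].
suff : backlog x = 0 by lia.
apply/eqP; rewrite sum_nat_eq0; apply/forallP => j; apply/implyP => _.
by have [k k_range <-] := iter_ordS_onto (stInc x) j; rewrite idle.
Qed.

Lemma quiet_drain m x : backlog x <= m -> backlog (iter (m * n.+1) quiet x) = 0.
Proof.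
elim: m x => [|m IHm] x le_bm; first by apply/eqP; rewrite -leqn0.
rewrite mulSn addnC iterD; apply: IHm.
case: (posnP (backlog x)) => [b0|/quiet_backlog_drop]; last lia.
by have := backlog_iter_quiet_le n.+1 x; lia.
Qed.

Definition empty_round c : state n.+1 :=
  ([ffun => 0], c, [ffun => 0], [ffun j => (cdist j c).+1]).

Lemma quiet_empty x : stQ x = [ffun => 0] ->
  [/\ stQ (quiet x) = [ffun => 0], stInc (quiet x) = ordS (stInc x),
      forall j, stL (quiet x) j = if j == ordS (stInc x) then 0 else stL x j
    & forall j, stV (quiet x) j = if j == ordS (stInc x) then 1 else (stV x j).+1].
Proof.
move=> Q0; have dec : decide threshold_policy x = ordS (stInc x).
  by rewrite decide_threshold Q0 ffunE.
have Q'0 : stQ (quiet x) = [ffun => 0].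
  by apply/ffunP => j; rewrite stQ_step Q0 !ffunE.
split=> // j; first by rewrite (stL_step _ x) dec Q'0 ffunE.
by rewrite (stV_step _ x) dec.
Qed.

Lemma iter_quiet_empty k x : stQ x = [ffun => 0] ->
  [/\ stQ (iter k quiet x) = [ffun => 0],
      stInc (iter k quiet x) = iter k (@ordS n.+1) (stInc x)
    & forall j, if cdist j (stInc (iter k quiet x)) < k
      then stL (iter k quiet x) j = 0 /\
           stV (iter k quiet x) j = (cdist j (stInc (iter k quiet x))).+1
      else stL (iter k quiet x) j = stL x j /\ stV (iter k quiet x) j = stV x j + k].
Proof.
move=> Q0; elim: k => [|k [Qk0 eInc inv]]; first by split=> // j; rewrite ltn0 addn0.
have [Q'0 eInc' eL eV] := quiet_empty Qk0.
rewrite iterS; split=> //; first by rewrite eInc' eInc.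
move=> j; rewrite eInc' eL eV.
have [->|ne_j] := eqVneq j (ordS (stInc (iter k quiet x))); first by rewrite cdistxx.
by rewrite cdistSr // ltnS; have := inv j; case: ifP => _ [-> ->]; split=> //; lia.
Qed.

Lemma iter_quiet_empty_round k x : stQ x = [ffun => 0] ->
  iter (n.+1 + k) quiet x = empty_round (iter k (@ordS n.+1) (stInc x)).
Proof.
move=> Q0; have [Qk0 eInc _] := iter_quiet_empty k Q0.
rewrite iterD -eInc; have [Q0' eInc' inv] := iter_quiet_empty n.+1 Qk0.
rewrite iter_ordS_period in eInc'.
by apply: state_ext => //; apply/ffunP => j;
  have := inv j; rewrite eInc' ltnS cdist_le => -[eL eV]; rewrite ?eL ?eV ffunE.
Qed.

Lemma quiet_hit K x : backlog x <= K ->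
  exists2 k, k < K * n.+1 + 2 * n.+1 & iter k.+1 quiet x = empty_round ord0.
Proof.
move=> /quiet_drain/backlog_eq0 Q0.
have [m m_range hit] := iter_ordS_onto (stInc (iter (K * n.+1) quiet x)) ord0.
exists (n.+1 + m + K * n.+1).-1; first lia.
by rewrite prednK; [rewrite iterD iter_quiet_empty_round // hit|lia].
Qed.

End ThresholdPolicy.

Lemma leR_sum (I : finType) (F G : I -> R) :
  (forall i, (F i <= G i)%R) -> (\big[Rplus/0]_i F i <= \big[Rplus/0]_i G i)%R.
Proof. by move=> FG; apply: (big_ind2 Rle) => [|*|i _]; [lra|lra|exact: FG]. Qed.

Lemma INR_sum (I : finType) (F : I -> nat) :
  INR (\sum_i F i) = (\big[Rplus/0]_i INR (F i))%R.
Proof. exact: (@big_morph R nat INR 0%R Rplus 0%nat addn plus_INR). Qed.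

Section ThresholdLyapunov.
Local Open Scope R_scope.
Variables (n th : nat) (lam : 'I_n.+1 -> R).
Hypothesis lam_cap : in_capacity lam.
Local Notation pol := (@threshold_policy n th).
Implicit Types (x : state n.+1).

Definition load : R := \big[Rplus/0]_j lam j.

Lemma lam_ge0 j : 0 <= lam j.
Proof. by case: lam_cap. Qed.

Lemma load_lt1 : load < 1.
Proof. by case: lam_cap => _; rewrite sumR_big big_enum. Qed.

Lemma lam_le_load j : lam j <= load.
Proof.
rewrite /load (bigD1 j) //= -{1}[lam j]Rplus_0_r; apply: Rplus_le_compat_l.
by apply: (big_ind (Rle 0)) => [|*|i _]; [lra|lra|exact: lam_ge0].
Qed.

Lemma load_ge0 : 0 <= load.
Proof. by apply: (big_ind (Rle 0)) => [|*|i _]; [lra|lra|exact: lam_ge0]. Qed.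

Lemma capacity_lam01 j : 0 <= lam j <= 1.
Proof. by have := lam_le_load j; have := load_lt1; have := lam_ge0 j; lra. Qed.

Definition base_weight : R := INR n.+1 / (1 - load).

Lemma base_weight_ge0 : 0 <= base_weight.
Proof. by apply/Rmult_le_pos/Rlt_le/Rinv_0_lt_compat; [exact: pos_INR|have := load_lt1; lra]. Qed.

Definition lyap x : R :=
  \big[Rplus/0]_j (INR (stQ x j) * (base_weight + INR (cdist (stInc x) j))).

Lemma lyap_ge0 x : 0 <= lyap x.
Proof.
apply: (big_ind (Rle 0)) => [|*|j _]; [lra|lra|].
by apply/Rmult_le_pos/Rplus_le_le_0_compat/pos_INR/base_weight_ge0/pos_INR.
Qed.

Definition lyap_served x : R := let s := decide pol x in
  \big[Rplus/0]_j (INR (stQ x j - (j == s)) * (base_weight + INR (cdist s j))).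

Lemma Earr_lyap x : Earr lam (fun a => lyap (step pol x a)) =
  lyap_served x + \big[Rplus/0]_j (lam j * (base_weight + INR (cdist (decide pol x) j))).
Proof.
rewrite (@eq_Earr _ _ _ (fun a => lyap_served x + \big[Rplus/0]_j
    ((base_weight + INR (cdist (decide pol x) j)) * if a j then 1 else 0))); last first.
  move=> a; rewrite /lyap /lyap_served -big_split; apply: eq_bigr => j _ /=.
  by rewrite stQ_step stInc_step plus_INR; case: (a j) => /=; ring.
rewrite EarrD Earr_cst Earr_bigsum; congr Rplus; apply: eq_bigr => j _.
by rewrite EarrZ Earr_arrival Rmult_comm.
Qed.

Lemma arrival_cost_le s :
  \big[Rplus/0]_j (lam j * (base_weight + INR (cdist s j))) <= (base_weight + INR n) * load.
Proof.
rewrite /load big_distrr; apply: leR_sum => j /=.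
rewrite Rmult_comm; apply: Rmult_le_compat_r; first exact: lam_ge0.
by have := le_INR _ _ (leP (cdist_le s j)); lra.
Qed.

Lemma lyap_served_stay x : (th < stQ x (stInc x))%nat -> lyap_served x + base_weight = lyap x.
Proof.
move=> th_lt; have dec : decide pol x = stInc x by rewrite decide_threshold th_lt.
rewrite /lyap_served /lyap /= dec.
have base_weightE : \big[Rplus/0]_j (if j == stInc x then base_weight else 0) = base_weight.
  by rewrite -big_mkcond big_pred1_eq.
rewrite -[X in _ + X = _]base_weightE -big_split.
apply: eq_bigr => j _ /=; have [->|ne_j] := eqVneq j (stInc x); last first.
  by rewrite subn0 Rplus_0_r.
rewrite cdistxx minus_INR /=; last by apply/leP; lia.
ring.
Qed.

Lemma lyap_served_move x : (stQ x (stInc x) <= th)%nat ->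
  lyap_served x <= lyap x - INR (backlog x) + INR (n.+1 * th).
Proof.
move=> Qinc_le; have dec : decide pol x = ordS (stInc x).
  by rewrite decide_threshold ltnNge Qinc_le.
have term j : INR (stQ x j - (j == ordS (stInc x))) * (base_weight + INR (cdist (ordS (stInc x)) j))
    + INR (stQ x j) <= INR (stQ x j) * (base_weight + INR (cdist (stInc x) j))
    + (if j == stInc x then INR (n.+1 * th) else 0).
  have Qj_le : INR (stQ x j - (j == ordS (stInc x))) <= INR (stQ x j) by apply/le_INR/leP; lia.
  have := Rmult_le_compat_r (base_weight + INR (cdist (ordS (stInc x)) j)) _ _ _ Qj_le.
  have := base_weight_ge0; have := pos_INR (cdist (ordS (stInc x)) j).
  have [->|ne_j] := eqVneq j (stInc x).
    rewrite cdistSl_self cdistxx mult_INR S_INR /=.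
    have : INR (stQ x (stInc x)) <= INR th by apply/le_INR/leP.
    by have := pos_INR n; move=> *; nra.
  have := cdistSl ne_j; have : cdist (stInc x) j <> 0%nat.
    by move/cdist_eq0/eqP; rewrite eq_sym (negbTE ne_j).
  case: (cdist (stInc x) j) => [//|d] _ ->; rewrite [d.+1.-1]/= S_INR; move=> *; nra.
have base_weightE : \big[Rplus/0]_j (if j == stInc x then INR (n.+1 * th) else 0) = INR (n.+1 * th).
  by rewrite -big_mkcond big_pred1_eq.
rewrite /lyap_served /lyap /backlog /= dec INR_sum.
by have := leR_sum term; rewrite !big_split /= base_weightE; lra.
Qed.

Definition drift_const : R := INR (n.+1 * th) + (base_weight + INR n) * load.

Lemma drift_const_ge0 : 0 <= drift_const.
Proof.
have := pos_INR (n.+1 * th); have := pos_INR n; have := base_weight_ge0; have := load_ge0.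
by rewrite /drift_const => *; nra.
Qed.

(* Staying with a busy incumbent gains base_weight against a loss of at most
   (base_weight + n) * load; handing over costs at most drift_const but earns one
   unit per backlogged packet. *)
Lemma lyap_drift_cases x :
  Earr lam (fun a => lyap (step pol x a)) <= lyap x - 1 \/
  Earr lam (fun a => lyap (step pol x a)) <= lyap x - INR (backlog x) + drift_const.
Proof.
rewrite Earr_lyap; have := arrival_cost_le (decide pol x).
case: (ltnP th (stQ x (stInc x))) => [/lyap_served_stay|/lyap_served_move]; last first.
  by rewrite /drift_const; right; lra.
have base_weight_load : base_weight - base_weight * load = INR n.+1.
  by rewrite /base_weight; field; have := load_lt1; lra.
have := load_lt1; have := load_ge0; have := pos_INR n; rewrite S_INR in base_weight_load.
by left; nra.
Qed.

Lemma lyap_drift x : Earr lam (fun a => lyap (step pol x a)) <= lyap x + drift_const.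
Proof.
by have := drift_const_ge0; have := pos_INR (backlog x); case: (lyap_drift_cases x); lra.
Qed.

Lemma lyap_drift_out K x : drift_const + 1 <= INR K -> (K < backlog x)%nat ->
  Earr lam (fun a => lyap (step pol x a)) <= lyap x - 1.
Proof.
move=> K_large /leP/lt_INR.
by case: (lyap_drift_cases x); lra.
Qed.

Lemma no_arrival_prob_gt0 : 0 < arrP lam (no_arrival n.+1).
Proof.
rewrite arrP_prod; apply: (big_ind (Rlt 0)) => [|*|j _]; [lra|nra|].
by rewrite ffunE; have := lam_le_load j; have := load_lt1; lra.
Qed.

End ThresholdLyapunov.

Lemma threshold_policy_throughput_optimal n th : throughput_optimal (@threshold_policy n th).
Proof.
move=> lam lam_cap; have [K K_large] := INR_unbounded (drift_const th lam + 1).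
apply: (@foster_hitting_stable _ _ _ (empty_round ord0) (capacity_lam01 lam_cap) _
  (no_arrival_prob_gt0 lam_cap) (fun x => backlog x <= K)%nat (K * n.+1 + 2 * n.+1) _ _
  _ _ (lyap_ge0 lam_cap) (drift_const_ge0 th lam_cap) (lyap_drift th lam_cap)) => x.
- exact/leq_trans/backlog_quiet_le.
- exact: quiet_hit.
- by rewrite -ltnNge; apply: lyap_drift_out => //; lra.
Qed.

Lemma reachable_step N (pi : policy N) (lam : 'I_N -> R) x a :
  (forall j, 0 <= lam j <= 1)%R -> (0 < arrP lam a)%R -> reachable pi lam x (step pi x a).
Proof.
move=> lam01 a_pos; exists 1.
have := @arrP_mul_le_Earr _ _ lam01 (fun b => if step pi x b == step pi x a then 1 else 0)%R a.
by rewrite eqxx Rmult_1_r => /(_ _)/(Rlt_le_trans _ _ _ a_pos); apply=> b; case: ifP => _; lra.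
Qed.

Lemma threshold_policies_disagree n : 0 < n ->
  exists (lam : 'I_n.+1 -> R) (i0 : 'I_n.+1) (y : state n.+1),
    in_capacity lam /\ reachable (threshold_policy 0) lam (empty_state i0) y /\
    decide (threshold_policy 0) y <> decide (threshold_policy 1) y.
Proof.
move=> n_gt0; pose s : 'I_n.+1 := ordS ord0.
pose lam j : R := if j == s then (/ 2)%R else 0%R.
pose a : {ffun 'I_n.+1 -> bool} := [ffun j => j == s].
have lam01 j : (0 <= lam j <= 1)%R by rewrite /lam; case: ifP => _; lra.
exists lam, ord0, (step (threshold_policy 0) (empty_state ord0) a); split; [|split].
- split=> [j|]; first by have := lam01 j; lra.
  by rewrite sumR_big big_enum /lam -big_mkcond big_pred1_eq; lra.
- apply: reachable_step => //; rewrite arrP_prod.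
  by apply: (big_ind (Rlt 0)) => [|*|j _]; [lra|nra|rewrite /a /lam ffunE; case: (j == s); lra].
- have dec0 : decide (threshold_policy 0) (empty_state ord0) = s.
    by rewrite decide_threshold /stQ /= ffunE.
  have Q1 : stQ (step (threshold_policy 0) (empty_state ord0) a) s = 1.
    by rewrite stQ_step dec0 !ffunE eqxx.
  rewrite /decide stInc_step dec0 Q1 /threshold_policy /=.
  by apply/eqP; rewrite eq_sym ordS_neq.
Qed.

Theorem proposition3 (N : nat) (hN : 1 < N) :
  exists pi1 pi2 : policy N,
    throughput_optimal pi1 /\ throughput_optimal pi2 /\
    exists (lam : 'I_N -> R) (i0 : 'I_N) (y : state N),
      in_capacity lam /\ reachable pi1 lam (empty_state i0) y /\
      decide pi1 y <> decide pi2 y.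
Proof.
case: N hN => [|n] // n_gt0.
exists (threshold_policy 0), (threshold_policy 1).
split; [|split]; try exact: threshold_policy_throughput_optimal.
exact: threshold_policies_disagree.
Qed.
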